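(* Fix $d\ge1$, $N\ge1$, $\alpha\ge2$, powers $P_s,P_r>0$, gains $\xi_{u,v}>0$, and positions $\mathbf{s},\mathbf{1},\dots,\mathbf{N}\in\mathbb{R}^d$ of the source and destinations with $\mathbf{s}\neq\mathbf{j}$ for all $j$. For a relay position $\mathbf{r}\in\mathbb{R}^d$ let $\mathsf{SNR}_{u,v}=\xi_{u,v}P_u/\|\mathbf{u}-\mathbf{v}\|^{\alpha}$ for $(u,v)\in\{(s,r),(s,j),(r,j)\}$ (an SNR being $+\infty$ when the corresponding distance is $0$), and for $\rho\in[0,1]$, $j=1,\dots,N$, define $$f_j(\rho,\mathbf{r})=\mathsf{SNR}_{s,j}+\mathsf{SNR}_{r,j}+2\rho\sqrt{\mathsf{SNR}_{s,j}\mathsf{SNR}_{r,j}},\qquad g_j(\rho,\mathbf{r})=(1-\rho^2)(\mathsf{SNR}_{s,j}+\mathsf{SNR}_{s,r}).$$ Then for every fixed $\rho\in[0,1]$, $f_j(\rho,\cdot)$ and $g_j(\rho,\cdot)$ are quasi-concave in $\mathbf{r}\in\mathbb{R}^d$. Furthermore, $(t,\mathbf{r})\mapsto f_j(\sqrt t,\mathbf{r})$ is quasi-concave on $[0,1]\times\mathbb{R}^d$ (i.e., $f_j$ is quasi-concave in $(\rho^2,\mathbf{r})$).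
   Context: Setting: real AWGN multicast relay channel with source $s$, relay $r$ at position $\mathbf{r}$, destinations $1,\dots,N$, path-loss exponent $\alpha$ and channel gain $a_{u,v}=\sqrt{\xi_{u,v}}/\|\mathbf{u}-\mathbf{v}\|^{\alpha/2}$, so $\mathsf{SNR}_{u,v}=a_{u,v}^2P_u$; $\rho$ is the source–relay input correlation coefficient. A function $F$ (possibly taking value $+\infty$) on a convex set is quasi-concave if $F(\lambda x_1+(1-\lambda)x_2)\ge\min(F(x_1),F(x_2))$ for all $x_1,x_2$ and $\lambda\in[0,1]$. *)

From HB Require Import structures.
From mathcomp Require Import all_boot all_order all_algebra.
From mathcomp Require Import all_classical all_reals.
From mathcomp Require Import exp.
Set Implicit Arguments. Unset Strict Implicit. Unset Printing Implicit Defensive.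
Import Order.TTheory GRing.Theory Num.Theory.
Local Open Scope ring_scope.
Local Open Scope ereal_scope.

Section Defs.
Variable R : realType.
Variable d : nat.

Definition enorm (x : 'rV[R]_d) : R := Num.sqrt (\sum_(i < d) (x ord0 i) ^+ 2)%R.

Definition SNR (xi P alpha : R) (u v : 'rV[R]_d) : \bar R :=
  if enorm (u - v) == 0%R then +oo
  else ((xi * P) / (enorm (u - v) `^ alpha))%:E.

Definition f_fun (xi_sj xi_rj Ps Pr alpha : R) (s pj : 'rV[R]_d)
    (rho : R) (r : 'rV[R]_d) : \bar R :=
  let a := SNR xi_sj Ps alpha s pj in
  let b := SNR xi_rj Pr alpha r pj in
  a + b + (2 * rho)%:E * sqrte (a * b).

Definition g_fun (xi_sj xi_sr Ps alpha : R) (s pj : 'rV[R]_d)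
    (rho : R) (r : 'rV[R]_d) : \bar R :=
  (1 - rho ^+ 2)%:E * (SNR xi_sj Ps alpha s pj + SNR xi_sr Ps alpha s r).

Definition quasiconcave_rV (F : 'rV[R]_d -> \bar R) : Prop :=
  forall (x1 x2 : 'rV[R]_d) (l : R), (0 <= l <= 1)%R ->
    Order.min (F x1) (F x2) <= F (l *: x1 + (1 - l) *: x2)%R.

Definition quasiconcave_joint (F : R -> 'rV[R]_d -> \bar R) : Prop :=
  forall (t1 t2 : R) (x1 x2 : 'rV[R]_d) (l : R),
    (0 <= t1 <= 1)%R -> (0 <= t2 <= 1)%R -> (0 <= l <= 1)%R ->
    Order.min (F t1 x1) (F t2 x2) <= F (l * t1 + (1 - l) * t2)%R (l *: x1 + (1 - l) *: x2)%R.
End Defs.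

From HB Require Import structures.
From mathcomp Require Import all_boot all_order all_algebra.
From mathcomp Require Import all_classical all_reals.
From mathcomp Require Import exp.
From mathcomp Require Import interval_inference convex hoelder.
From mathcomp Require Import ring lra.
Import Order.TTheory GRing.Theory Num.Theory.
Local Open Scope ring_scope.

(* Fix a level L and put K = L - SNR_sj, q = ||r - p_j||^(alpha/2). Since
   SNR_rj = c / q^2 with c = xi_rj P_r, and sqrt (SNR_sj SNR_rj) = g / q with
   g = sqrt (SNR_sj c), the inequality
   f_j(sqrt t, r) >= L is a quadratic inequality in 1/q, equivalent to
   K q <= sqrt t g + sqrt (t g^2 + K c).  The right-hand side is concave in t
   and q is convex in r because alpha/2 >= 1, so the superlevel sets of
   (t, r) |-> f_j(sqrt t, r) are convex; taking t = rho^2 gives the statement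
   for fixed rho.  For g_j, SNR_sr decreases with ||s - r|| and the distance
   from s to a point of a segment is at most the larger of the distances to
   its endpoints. *)

Lemma lagrange_identity {R : comRingType} {I : finType} (u v : I -> R) :
  \sum_i \sum_j (u i * v j - u j * v i) ^+ 2 =
  2 * ((\sum_i u i ^+ 2) * (\sum_i v i ^+ 2) - (\sum_i u i * v i) ^+ 2).
Proof.
set A := \sum_i u i ^+ 2; set B := \sum_i v i ^+ 2; set C := \sum_i u i * v i.
have inner i : \sum_j (u i * v j - u j * v i) ^+ 2 =
    u i ^+ 2 * B + v i ^+ 2 * A - 2 * (u i * v i) * C.
  rewrite /A /B /C !mulr_sumr -big_split -sumrB /=; apply: eq_bigr => j _; ring.
rewrite (eq_bigr _ (fun i _ => inner i)) sumrB big_split /=.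
by rewrite -!mulr_suml -mulr_sumr -/A -/B -/C; ring.
Qed.

Lemma cauchy_schwarz {R : realDomainType} {I : finType} (u v : I -> R) :
  (\sum_i u i * v i) ^+ 2 <= (\sum_i u i ^+ 2) * (\sum_i v i ^+ 2).
Proof.
rewrite -subr_ge0 -(pmulr_rge0 _ (ltr0Sn R 1)) -lagrange_identity.
by apply: sumr_ge0 => i _; apply: sumr_ge0 => j _; exact: sqr_ge0.
Qed.

Section RealInequalities.
Context {R : rcfType}.

Lemma sqrtr_concave {u v l : R} : 0 <= u -> 0 <= v -> 0 <= l <= 1 ->
  l * Num.sqrt u + (1 - l) * Num.sqrt v <= Num.sqrt (l * u + (1 - l) * v).
Proof.
move=> u0 v0 /andP[l0 l1].
have [su sv] := (sqrtr_ge0 u, sqrtr_ge0 v).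
have [Hu Hv] := (sqr_sqrtr u0, sqr_sqrtr v0).
set a := Num.sqrt u in su Hu *; set b := Num.sqrt v in sv Hv *.
have h0 : 0 <= l * a + (1 - l) * b by nra.
rewrite -(ger0_norm h0) -sqrtr_sqr ler_sqrt -?Hu -?Hv; last by nra.
have l'_ge0 : 0 <= 1 - l by rewrite subr_ge0.
have := mulr_ge0 (mulr_ge0 l0 l'_ge0) (sqr_ge0 (a - b)).
nra.
Qed.

Lemma ler_inv_quadratic (K c s q : R) : 0 <= c -> 0 <= s -> 0 < q ->
  (K <= c / q ^+ 2 + 2 * s / q) = (K * q <= s + Num.sqrt (s ^+ 2 + K * c)).
Proof.
move=> c0 s0 q0.
have rhs_ge0 : 0 <= c / q ^+ 2 + 2 * s / q.
  by rewrite addr_ge0 // divr_ge0 ?mulr_ge0 ?exprn_ge0 // ltW.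
have [K0|K0] := lerP K 0.
  rewrite (le_trans K0 rhs_ge0); apply/esym/(@le_trans _ _ 0); first nra.
  by rewrite addr_ge0 ?sqrtr_ge0.
have Kc0 : 0 <= K * c by rewrite mulr_ge0 // ltW.
have HS := sqr_sqrtr (addr_ge0 (sqr_ge0 s) Kc0).
have S0 := sqrtr_ge0 (s ^+ 2 + K * c).
set S := Num.sqrt _ in HS S0 *.
(* For K > 0, K X^2 - 2 s X - c <= 0 on X >= 0 exactly when K X <= s + S. *)
have -> : (K <= c / q ^+ 2 + 2 * s / q) = (K * q ^+ 2 - 2 * s * q - c <= 0).
  have q2 : 0 < q ^+ 2 by rewrite exprn_gt0.
  have -> : c / q ^+ 2 + 2 * s / q = (c + 2 * s * q) / q ^+ 2.
    by field; rewrite gt_eqF.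
  by rewrite ler_pdivlMr //; apply/idP/idP => h; nra.
have Kq0 : 0 <= K * q by rewrite mulr_ge0 // ltW.
have sS : s <= S by rewrite -(ler_pXn2r (_ : 0 < 2)%N) ?nnegrE // HS lerDl.
apply/idP/idP => h.
  have sqr_le : (K * q - s) ^+ 2 <= S ^+ 2 by rewrite HS; nra.
  nra.
have lo : 0 <= S + (K * q - s) by lra.
have hi : 0 <= S - (K * q - s) by lra.
have := mulr_ge0 hi lo; rewrite -subr_sqr HS subr_ge0; nra.
Qed.

Definition level_radius (g k t : R) : R :=
  Num.sqrt t * g + Num.sqrt (t * g ^+ 2 + k).

Lemma level_radius_ge0 (g k t : R) : 0 <= g -> 0 <= level_radius g k t.
Proof. by move=> g0; rewrite addr_ge0 ?mulr_ge0 ?sqrtr_ge0. Qed.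

Lemma level_radius_concave (g k t1 t2 l : R) :
  0 <= g -> 0 <= k -> 0 <= t1 -> 0 <= t2 -> 0 <= l <= 1 ->
  l * level_radius g k t1 + (1 - l) * level_radius g k t2 <=
  level_radius g k (l * t1 + (1 - l) * t2).
Proof.
move=> g0 k0 t10 t20 l01; have /andP[l0 l1] := l01.
have affine_ge0 t : 0 <= t -> 0 <= t * g ^+ 2 + k.
  by move=> t0; rewrite addr_ge0 ?mulr_ge0 ?sqr_ge0.
have := sqrtr_concave t10 t20 l01.
have := sqrtr_concave (affine_ge0 _ t10) (affine_ge0 _ t20) l01.
have -> : l * (t1 * g ^+ 2 + k) + (1 - l) * (t2 * g ^+ 2 + k) =
          (l * t1 + (1 - l) * t2) * g ^+ 2 + k by ring.
rewrite /level_radius; nra.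
Qed.

End RealInequalities.

Lemma powR_convex {R : realType} (e x y l : R) :
  1 <= e -> 0 <= x -> 0 <= y -> 0 <= l <= 1 ->
  (l * x + (1 - l) * y) `^ e <= l * x `^ e + (1 - l) * y `^ e.
Proof.
move=> e1 x0 y0 /andP[l0 l1].
have := convex_powR e1 (Itv01 l0 l1) (x := x) (y := y).
by rewrite !inE /= !in_itv /= !andbT !convRE => /(_ x0 y0).
Qed.

Section EuclideanNorm.
Context {R : realType} {d : nat}.
Implicit Types (x y p : 'rV[R]_d).

Lemma enormZ (k : R) x : enorm (k *: x) = `|k| * enorm x.
Proof.
rewrite /enorm -sqrtr_sqr -sqrtrM ?sqr_ge0 // mulr_sumr.
by congr Num.sqrt; apply: eq_bigr => i _; rewrite mxE exprMn.
Qed.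

Lemma enormBC x y : enorm (x - y) = enorm (y - x).
Proof. by rewrite -opprB -scaleN1r enormZ normrN normr1 mul1r. Qed.

Lemma enorm_eq0 x : enorm x = 0 -> x = 0.
Proof.
move/eqP; rewrite sqrtr_eq0 => sum_le0.
have sum0 : \sum_i x ord0 i ^+ 2 = 0.
  by apply/eqP; rewrite eq_le sum_le0 sumr_ge0 // => i _; exact: sqr_ge0.
apply/matrixP => i j; rewrite (ord1 i) mxE.
have /eqP := psumr_eq0P (fun i _ => sqr_ge0 (x ord0 i)) sum0 (i := j) isT.
by rewrite sqrf_eq0 => /eqP.
Qed.

Lemma enormD x y : enorm (x + y) <= enorm x + enorm y.
Proof.
rewrite /enorm; set A := \sum_i x ord0 i ^+ 2; set B := \sum_i y ord0 i ^+ 2.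
have [A0 B0] : 0 <= A /\ 0 <= B by split; apply: sumr_ge0 => i _; exact: sqr_ge0.
have CS := cauchy_schwarz (fun i => x ord0 i) (fun i => y ord0 i).
have -> : \sum_i (x + y) ord0 i ^+ 2 =
    A + B + 2 * \sum_i x ord0 i * y ord0 i.
  by rewrite mulr_sumr -!big_split; apply: eq_bigr => i _; rewrite mxE /=; ring.
have [HA HB] := (sqr_sqrtr A0, sqr_sqrtr B0).
have [sA sB] := (sqrtr_ge0 A, sqrtr_ge0 B).
have cross : \sum_i x ord0 i * y ord0 i <= Num.sqrt A * Num.sqrt B.
  apply/ler_normlW; rewrite -ler_sqr ?nnegrE ?mulr_ge0 //.
  by rewrite real_normK ?num_real // exprMn HA HB.
rewrite -(ger0_norm (addr_ge0 sA sB)) -sqrtr_sqr ler_sqrt ?sqr_ge0 //.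
rewrite sqrrD HA HB; lra.
Qed.

Lemma enorm_convex x y p (l : R) : 0 <= l <= 1 ->
  enorm (l *: x + (1 - l) *: y - p) <= l * enorm (x - p) + (1 - l) * enorm (y - p).
Proof.
move=> /andP[l0 l1].
have -> : l *: x + (1 - l) *: y - p = l *: (x - p) + (1 - l) *: (y - p).
  by apply/rowP => i; rewrite !mxE; ring.
by apply: le_trans (enormD _ _) _; rewrite !enormZ !ger0_norm // subr_ge0.
Qed.

Lemma enorm_le_max x y p (l : R) : 0 <= l <= 1 ->
  enorm (l *: x + (1 - l) *: y - p) <= Num.max (enorm (x - p)) (enorm (y - p)).
Proof.
move=> l01; have /andP[l0 l1] := l01.
apply: le_trans (enorm_convex x y p l l01) _.
by have [le_xy|lt_yx] := leP (enorm (x - p)) (enorm (y - p)); nra.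
Qed.

Lemma enorm_powR_convex (e : R) x y p (l : R) : 1 <= e -> 0 <= l <= 1 ->
  enorm (l *: x + (1 - l) *: y - p) `^ e <=
  l * enorm (x - p) `^ e + (1 - l) * enorm (y - p) `^ e.
Proof.
move=> e1 l01; have /andP[l0 l1] := l01.
apply: le_trans (powR_convex _ _ _ _ e1 (sqrtr_ge0 _) (sqrtr_ge0 _) l01).
rewrite ge0_ler_powR ?nnegrE ?sqrtr_ge0 ?(le_trans ler01 e1) ?enorm_convex //.
by rewrite addr_ge0 ?mulr_ge0 ?sqrtr_ge0 ?subr_ge0.
Qed.
End EuclideanNorm.

Lemma lee_levels {R : realType} (x y : \bar R) :
  (forall r : R, (r%:E <= x -> r%:E <= y)%E) -> (x <= y)%E.
Proof.
case: x => [r h | h |]; [exact/h | | by rewrite leNye].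
by rewrite (@eq_infty _ y) // => r; apply/h/leey.
Qed.

Lemma ler_powRV {R : realType} (a x y : R) : 0 <= a -> 0 < x -> x <= y ->
  (y `^ a)^-1 <= (x `^ a)^-1.
Proof.
move=> a0 x0 xy; have y0 := lt_le_trans x0 xy.
rewrite lef_pV2 ?posrE ?powR_gt0 //.
by rewrite ge0_ler_powR // nnegrE ltW.
Qed.

Section SNR.
Context {R : realType} {d : nat}.
Variables (xi P alpha : R).
Implicit Types (u v : 'rV[R]_d).
Local Open Scope ereal_scope.

Lemma SNR_EFin u v : (0 < enorm (u - v))%R ->
  SNR xi P alpha u v = (xi * P / enorm (u - v) `^ alpha)%:E.
Proof. by move=> uv; rewrite /SNR gt_eqF. Qed.

Lemma SNR_ge0 u v : (0 <= xi * P)%R -> 0 <= SNR xi P alpha u v.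
Proof.
by move=> c0; rewrite /SNR; case: ifP => // _; rewrite lee_fin divr_ge0 ?powR_ge0.
Qed.

Lemma SNR_le u v u' v' : (0 <= xi * P)%R -> (0 <= alpha)%R ->
  (enorm (u - v) <= enorm (u' - v'))%R -> SNR xi P alpha u' v' <= SNR xi P alpha u v.
Proof.
move=> c0 alpha0 le_uv; have [uv0|uv0] := eqVneq (enorm (u - v)) 0%R.
  by rewrite /SNR uv0 eqxx leey.
have uv_gt0 : (0 < enorm (u - v))%R by rewrite lt0r uv0 sqrtr_ge0.
have uv'_gt0 := lt_le_trans uv_gt0 le_uv.
have := ler_wpM2l c0 (ler_powRV _ _ _ alpha0 uv_gt0 le_uv).
by rewrite (SNR_EFin _ _ uv_gt0) (SNR_EFin _ _ uv'_gt0) lee_fin.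
Qed.
End SNR.

Section QuasiconcaveF.
Context {R : realType} {d : nat} {xs xr Ps Pr alpha : R} {s p : 'rV[R]_d}.
Hypotheses (xs_gt0 : 0 < xs) (xr_gt0 : 0 < xr) (Ps_gt0 : 0 < Ps) (Pr_gt0 : 0 < Pr)
  (alpha_ge2 : 2 <= alpha) (s_neq_p : s != p).

Let a : R := xs * Ps / enorm (s - p) `^ alpha.
Let c : R := xr * Pr.
Let g : R := Num.sqrt (a * c).
Let q (x : 'rV[R]_d) : R := enorm (x - p) `^ (alpha / 2).
Let F t x := f_fun xs xr Ps Pr alpha s p (Num.sqrt t) x.

Let dist_sp_gt0 : 0 < enorm (s - p).
Proof.
rewrite lt0r sqrtr_ge0 andbT; apply: contra s_neq_p.
by move=> /eqP/enorm_eq0/eqP; rewrite subr_eq0.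
Qed.

Let a_gt0 : 0 < a.
Proof. by rewrite divr_gt0 ?mulr_gt0 ?powR_gt0. Qed.

Let c_gt0 : 0 < c.
Proof. by rewrite mulr_gt0. Qed.

Let g_ge0 : 0 <= g.
Proof. exact: sqrtr_ge0. Qed.

Lemma f_fun_EFin t x : 0 < enorm (x - p) ->
  F t x = (a + c / q x ^+ 2 + 2 * (Num.sqrt t * g) / q x)%:E.
Proof.
move=> xp_gt0; have q_gt0 : 0 < q x by rewrite powR_gt0.
have pow_alpha : enorm (x - p) `^ alpha = q x ^+ 2.
  by rewrite /q -powR_mulrn ?powR_ge0 // -powRrM divfK ?pnatr_eq0.
rewrite /F /f_fun !SNR_EFin // pow_alpha /= -/a -/c -EFinM -!EFinD.
have sqrt_cross : Num.sqrt (a * (c / q x ^+ 2)) = g / q x.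
  rewrite mulrA sqrtrM; last by rewrite mulr_ge0 ?ltW.
  by rewrite -exprVn sqrtr_sqr ger0_norm // invr_ge0 ltW.
by congr (_ + _ + _)%:E; rewrite sqrt_cross !mulrA.
Qed.

Lemma f_fun_ge L t x : 0 <= t ->
  (L%:E <= F t x)%E = ((L - a) * q x <= level_radius g ((L - a) * c) t).
Proof.
move=> t0; have [xp0|xp_neq0] := eqVneq (enorm (x - p)) 0.
  have -> : F t x = +oo%E.
    have nNy z : (0 <= z)%E -> z != -oo%E by case: z.
    have SNR_sp_ge0 := SNR_ge0 xs Ps alpha s p (ltW (mulr_gt0 xs_gt0 Ps_gt0)).
    rewrite /F /f_fun [SNR _ _ _ x p]/SNR xp0 eqxx addey ?addye ?nNy //.
    by rewrite mule_ge0 ?sqrte_ge0 // lee_fin mulr_ge0 ?sqrtr_ge0.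
  rewrite leey /q xp0 powR0 ?mulr0 ?level_radius_ge0 //.
  by rewrite mulf_neq0 ?invr_eq0 // gt_eqF // (lt_le_trans _ alpha_ge2).
have xp_gt0 : 0 < enorm (x - p) by rewrite lt0r xp_neq0 sqrtr_ge0.
have q_gt0 : 0 < q x by rewrite powR_gt0.
have s_ge0 : 0 <= Num.sqrt t * g by rewrite mulr_ge0 ?sqrtr_ge0.
rewrite f_fun_EFin // lee_fin -addrA -lerBlDl.
rewrite (ler_inv_quadratic _ _ _ _ (ltW c_gt0) s_ge0 q_gt0).
by rewrite /level_radius exprMn sqr_sqrtr.
Qed.

Lemma f_fun_quasiconcave_joint : quasiconcave_joint F.
Proof.
move=> t1 t2 x1 x2 l /andP[t1_ge0 _] /andP[t2_ge0 _] l01.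
have /andP[l0 l1] := l01.
have t_ge0 : 0 <= l * t1 + (1 - l) * t2 by rewrite addr_ge0 ?mulr_ge0 ?subr_ge0.
apply: lee_levels => L; rewrite le_min => /andP[le1 le2].
rewrite (f_fun_ge L t1 x1 t1_ge0) in le1; rewrite (f_fun_ge L t2 x2 t2_ge0) in le2.
rewrite (f_fun_ge L _ _ t_ge0).
have [K_le0|K_gt0] := lerP (L - a) 0.
  by apply: le_trans (level_radius_ge0 _ _ _ g_ge0); rewrite mulr_le0_ge0 ?powR_ge0.
have Kc_ge0 : 0 <= (L - a) * c by rewrite mulr_ge0 ?ltW.
apply: le_trans (level_radius_concave _ _ _ _ _ g_ge0 Kc_ge0 t1_ge0 t2_ge0 l01).
have e_ge1 : 1 <= alpha / 2 by rewrite ler_pdivlMr // mul1r.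
have q_convex := enorm_powR_convex _ x1 x2 p _ e_ge1 l01.
apply: le_trans (ler_wpM2l (ltW K_gt0) q_convex) _.
rewrite -/(q x1) -/(q x2); nra.
Qed.
End QuasiconcaveF.

Lemma g_fun_quasiconcave (R : realType) (d : nat) (xs xsr Ps alpha rho : R)
    (s p : 'rV[R]_d) :
  0 < xsr -> 0 < Ps -> 0 <= alpha -> 0 <= rho <= 1 ->
  quasiconcave_rV (g_fun xs xsr Ps alpha s p rho).
Proof.
move=> xsr_gt0 Ps_gt0 alpha_ge0 /andP[rho0 rho1] x1 x2 l l01.
have /andP[l0 l1] := l01.
have k_ge0 : (0 <= (1 - rho ^+ 2)%:E)%E.
  by rewrite lee_fin subr_ge0 expr_le1.
have c_ge0 : 0 <= xsr * Ps by rewrite mulr_ge0 ?ltW.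
have dist_mid : enorm (s - (l *: x1 + (1 - l) *: x2)) <=
    Num.max (enorm (s - x1)) (enorm (s - x2)).
  rewrite [X in X <= _]enormBC (enormBC s x1) (enormBC s x2).
  exact: enorm_le_max.
move: dist_mid; rewrite le_max /g_fun ge_min => /orP[] dist_mid;
  apply/orP; [left|right];
  by apply: (lee_wpmul2l k_ge0); apply: leeD2l; apply: SNR_le.
Qed.

Theorem lemma3 (R : realType) (d N : nat) (alpha Ps Pr xi_sr : R)
    (xi_sj xi_rj : 'I_N -> R) (s : 'rV[R]_d) (pos : 'I_N -> 'rV[R]_d) :
  (0 < d)%N -> (0 < N)%N -> 2 <= alpha -> 0 < Ps -> 0 < Pr -> 0 < xi_sr ->
  (forall j, 0 < xi_sj j) -> (forall j, 0 < xi_rj j) ->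
  (forall j, s != pos j) ->
  forall j : 'I_N,
    (forall rho : R, 0 <= rho <= 1 ->
       quasiconcave_rV (f_fun (xi_sj j) (xi_rj j) Ps Pr alpha s (pos j) rho)
       /\ quasiconcave_rV (g_fun (xi_sj j) xi_sr Ps alpha s (pos j) rho))
    /\ quasiconcave_joint
         (fun t r => f_fun (xi_sj j) (xi_rj j) Ps Pr alpha s (pos j) (Num.sqrt t) r).
Proof.
move=> _ _ alpha_ge2 Ps_gt0 Pr_gt0 xsr_gt0 xsj_gt0 xrj_gt0 s_neq_pos j.
have joint := f_fun_quasiconcave_joint (xsj_gt0 j) (xrj_gt0 j) Ps_gt0 Pr_gt0
  alpha_ge2 (s_neq_pos j).
split=> // rho rho01; split; last first.
  by apply: g_fun_quasiconcave => //; apply: le_trans alpha_ge2.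
move=> x1 x2 l l01; have /andP[rho0 rho1] := rho01.
have rho2_01 : 0 <= rho ^+ 2 <= 1 by rewrite sqr_ge0 expr_le1.
have := joint _ _ x1 x2 l rho2_01 rho2_01 l01.
by rewrite -mulrDl subrKC mul1r sqrtr_sqr ger0_norm.
Qed.
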